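(* Let $p$ be a positive integer, $\lambda\neq0$, $k\in\mathbb{N}$, and $f\in\mathcal{R}$ with $U_pf=\lambda f$. Then \[U_p\Big[\Big(x\frac{d}{dx}\Big)^kf\Big]=(p^k\lambda)\Big(x\frac{d}{dx}\Big)^kf.\] In other words, if $\lambda$ is an eigenvalue of $U_p$ with eigenfunction $f$, then $p^k\lambda$ is an eigenvalue of $U_p$ with eigenfunction $(x\frac{d}{dx})^kf$.
   Context: $\mathcal{R}$ denotes the real vector space of rational functions $f(x)=A(x)/B(x)$ with $A,B\in\mathbb{R}[x]$, $B(0)\neq 0$ and $\deg A<\deg B$. For $f$ with Taylor expansion $f(x)=\sum_{n\ge0}a_nx^n$ at $0$ and a positive integer $p$, $U_pf(x)=\sum_{n\ge 0}a_{pn}x^n$. *)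

From Stdlib Require Import Reals.
From Coquelicot Require Import Coquelicot.
From mathcomp Require Import all_boot all_algebra.
From mathcomp Require Import Rstruct.

Set Implicit Arguments.
Local Open Scope R_scope.
Unset Strict Implicit.
Unset Printing Implicit Defensive.

Definition ratfun (A B : {poly R}) : R -> R := fun x => Rdiv (horner A x) (horner B x).

(* Membership of A/B in the space \mathcal{R}: B(0) <> 0 and deg A < deg B
   (size = degree + 1, size 0 = 0, so A = 0 is allowed). *)
Definition in_calR (A B : {poly R}) : Prop :=
  horner B 0 <> 0 /\ (size A < size B)%N.

Definition taylor_coef (f : R -> R) (n : nat) : R :=
  Rdiv (Derive_n f n 0) (INR (Factorial.fact n)).

Definition theta (f : R -> R) : R -> R := fun x => Rmult x (Derive f x).

(* U_p g = mu g, expressed on the Taylor coefficients: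
   U_p g (x) = sum_n a_{pn} x^n and mu g (x) = sum_n mu a_n x^n. *)
Definition Up_eigen (p : nat) (mu : R) (g : R -> R) : Prop :=
  forall n : nat, taylor_coef g (p * n) = Rmult mu (taylor_coef g n).

(** The Euler operator [theta = x d/dx] acts diagonally on Taylor coefficients
    at 0: differentiating [theta f] [n] times and evaluating at 0 kills the
    term [x f^(n+1)] and leaves [n f^(n)(0)], so the [n]-th coefficient of
    [theta^k f] is [n^k a_n].  Since [(p n)^k = p^k n^k], the eigenvalue
    relation [a_(p n) = lam a_n] becomes [(p n)^k a_(p n) = p^k lam n^k a_n].
    The smoothness needed to differentiate termwise comes from working with
    functions that agree near 0 with a quotient of polynomials whose
    denominator does not vanish there, a class closed under [d/dx] and
    [theta]. *)

From Stdlib Require Import Reals.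
From Coquelicot Require Import Coquelicot.
From mathcomp Require Import all_boot all_algebra.
From mathcomp Require Import Rstruct.

Local Open Scope R_scope.

Lemma is_derive_horner (P : {poly R}) (x : R) :
  is_derive (horner P) x (horner P^`() x).
Proof.
elim/poly_ind: P => [|P c IH].
  rewrite deriv0 horner0.
  apply: (is_derive_ext (fun _ => 0)); first by move=> t; rewrite horner0.
  exact: is_derive_const.
apply: (is_derive_ext (fun t => horner P t * t + c)).
  by move=> t; rewrite hornerMXaddC.
rewrite derivMXaddC hornerD hornerMX.
have := is_derive_plus _ _ _ _ _
  (is_derive_mult _ _ _ _ _ IH (is_derive_id x) Rmult_comm) (is_derive_const c x).
move/(@eq_ind R _ (is_derive _ _)); apply.
rewrite /plus /mult /zero /Hierarchy.one /= -RmultE -RplusE; ring.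
Qed.

Definition locally_rational (f : R -> R) : Prop :=
  exists P Q : {poly R},
    locally 0 (fun x => horner Q x <> 0 /\ f x = horner P x / horner Q x).

Lemma locally_rational_ratfun (A B : {poly R}) :
  horner B 0 <> 0 -> locally_rational (ratfun A B).
Proof.
move=> B0; exists A, B.
have B_cont : continuous (horner B) 0.
  exact: ex_derive_continuous (ex_intro _ _ (is_derive_horner B 0)).
have B_near : locally 0 (fun x => horner B x <> 0) := B_cont _ (open_neq 0 _ B0).
by apply: filter_imp B_near => x Bx; split.
Qed.

Lemma locally_is_derive_quotient (f : R -> R) (P Q : {poly R}) :
  locally 0 (fun x => horner Q x <> 0 /\ f x = horner P x / horner Q x) ->
  locally 0 (fun x => horner (Q * Q) x <> 0 /\
    is_derive f x (horner (P^`() * Q - P * Q^`()) x / horner (Q * Q) x)).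
Proof.
move=> near_f; apply: filter_imp (filter_and _ _ near_f (locally_locally _ _ near_f)).
move=> y [[Qy _] near_y].
have QQy : horner (Q * Q) y <> 0.
  by rewrite hornerM -RmultE; apply: Rmult_integral_contrapositive_currified.
split=> //.
apply: (is_derive_ext_loc (fun t => horner P t / horner Q t)).
  by apply: filter_imp near_y => t [_ ->].
have := is_derive_div _ _ _ _ _ (is_derive_horner P y) (is_derive_horner Q y) Qy.
rewrite !(hornerD, hornerN, hornerM) -!RmultE -RoppE -RplusE.
move/(@eq_ind R _ (is_derive _ _)); apply.
(* [field] does not identify the [horner] atoms, which carry different
   canonical instance paths on the two sides, so abstract them first. *)
by move: (horner P y) (horner Q y) (horner P^`() y) (horner Q^`() y) Qy => a b a' b' b0; field.
Qed.

Lemma locally_rational_ex_derive (f : R -> R) :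
  locally_rational f -> locally 0 (ex_derive f).
Proof.
move=> [P [Q /locally_is_derive_quotient near_f]].
by apply: filter_imp near_f => x [_ f'x]; eexists; exact: f'x.
Qed.

Lemma locally_rational_Derive (f : R -> R) :
  locally_rational f -> locally_rational (Derive f).
Proof.
move=> [P [Q /locally_is_derive_quotient near_f]].
exists (P^`() * Q - P * Q^`())%R, (Q * Q)%R.
by apply: filter_imp near_f => x [QQx /is_derive_unique ->].
Qed.

Lemma locally_rational_theta (f : R -> R) :
  locally_rational f -> locally_rational (theta f).
Proof.
move=> /locally_rational_Derive [P [Q near_f']].
exists (P * 'X)%R, Q; apply: filter_imp near_f' => x [Qx f'x]; split=> //.
by rewrite /theta f'x hornerMX -RmultE /Rdiv; ring.
Qed.

Lemma locally_rational_Derive_n (f : R -> R) (n : nat) :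
  locally_rational f -> locally_rational (Derive_n f n).
Proof.
by move=> rat_f; elim: n => [|n IH] //; apply: locally_rational_Derive.
Qed.

Lemma locally_rational_ex_derive_n (f : R -> R) (n : nat) :
  locally_rational f ->
  locally 0 (fun y => forall k, (k <= n)%coq_nat -> ex_derive_n f k y).
Proof.
move=> rat_f; elim: n => [|n IH].
  by apply: filter_forall => y k /Nat.le_0_r ->.
have near_Dn := locally_rational_ex_derive _ (locally_rational_Derive_n _ n rat_f).
apply: filter_imp (filter_and _ _ IH near_Dn) => y [below_n Dn_y] k.
by case/Nat.le_succ_r => [/below_n|->].
Qed.

Lemma locally_Derive_theta (f : R -> R) :
  locally_rational f ->
  locally 0 (fun y => Derive (theta f) y = Derive f y + theta (Derive f) y).
Proof.
move=> /locally_rational_Derive /locally_rational_ex_derive near_f'.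
apply: filter_imp near_f' => y f'_y; apply: is_derive_unique.
have := is_derive_mult _ _ _ _ _ (is_derive_id y) (Derive_correct _ _ f'_y) Rmult_comm.
rewrite /theta /mult /Hierarchy.one /plus /=.
move/(@eq_ind R _ (is_derive _ _)); apply; ring.
Qed.

Lemma Derive_n_theta_0 (f : R -> R) (n : nat) :
  locally_rational f -> Derive_n (theta f) n 0 = INR n * Derive_n f n 0.
Proof.
elim: n f => [|n IH] f rat_f; first by rewrite /= /theta; ring.
have Derive_nS g : Derive_n g n.+1 0 = Derive_n (Derive g) n 0.
  by rewrite -[n.+1]Nat.add_1_r -Derive_n_comp.
have rat_f' := locally_rational_Derive _ rat_f.
rewrite !Derive_nS (Derive_n_ext_loc _ _ n 0 (locally_Derive_theta _ rat_f)).
rewrite Derive_n_plus; last first.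
- exact: locally_rational_ex_derive_n _ _ (locally_rational_theta _ rat_f').
- exact: locally_rational_ex_derive_n _ _ rat_f'.
by rewrite IH // S_INR; ring.
Qed.

Lemma taylor_coef_iter_theta (f : R -> R) (k n : nat) :
  locally_rational f ->
  taylor_coef (Nat.iter k theta f) n = INR n ^ k * taylor_coef f n.
Proof.
move=> rat_f; rewrite /taylor_coef /Rdiv.
elim: k => [|k IH] /=; first ring.
have rat_iter : locally_rational (Nat.iter k theta f).
  by elim: k {IH} => [|j IHj] //; apply: locally_rational_theta.
by rewrite Derive_n_theta_0 // Rmult_assoc IH; ring.
Qed.

Lemma Up_eigen_iter_theta (p : nat) (lam : R) (k : nat) (f : R -> R) :
  locally_rational f -> Up_eigen p lam f ->
  Up_eigen p (INR p ^ k * lam) (Nat.iter k theta f).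
Proof.
move=> rat_f eigen_f n.
rewrite !(taylor_coef_iter_theta _ k) // eigen_f mult_INR Rpow_mult_distr; ring.
Qed.

Theorem mainTheorem10 (p : nat) (lam : R) (k : nat) (A B : {poly R}) :
  (0 < p)%nat -> lam <> 0 -> in_calR A B ->
  Up_eigen p lam (ratfun A B) ->
  Up_eigen p (Rmult (pow (INR p) k) lam) (Nat.iter k theta (ratfun A B)).
Proof.
move=> _ _ [B0 _].
exact/Up_eigen_iter_theta/locally_rational_ratfun.
Qed.
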